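(* Let $\mathcal{T}$ be a conforming simplicial mesh in $\mathbb{R}^d$ with nodes $\{\mathbf{x}_i\}$ and adjacency matrix $\mathbf{A}$ ($\mathbf{A}_{i,j}=1$ iff nodes $i\neq j$ are joined by an edge of some cell, and $0$ otherwise). For a point $\mathbf{x}$ in a cell $T$ with vertex set $\mathcal{N}^0(T)$, define for each node $i$ $$\eta_i(\mathbf{x})=\sum_{n\in\mathcal{N}^0(T)} B_n(\mathbf{x})\,\mathbf{A}_{i,n},$$ where $B_n(\mathbf{x})$ is the barycentric coordinate of $\mathbf{x}$ with respect to vertex $n$ of $T$. Let $T_o$ and $T_n$ be two cells sharing a facet $F$, let $\mathcal{N}^1_o,\mathcal{N}^1_n$ be their 1-ring neighbour sets, $\mathcal{N}^1_r=\mathcal{N}^1_o\setminus\mathcal{N}^1_n$ and $\mathcal{N}^1_a=\mathcal{N}^1_n\setminus\mathcal{N}^1_o$. Then $\eta$ is locally diminishing on added/removed nodes: for a point crossing $F$ from $\mathbf{x}^o\in T_o$ to $\mathbf{x}^n\in T_n$ with $\|\mathbf{x}^n-\mathbf{x}^o\|=\mathcal{O}(\epsilon)$, one has $\eta_i(\mathbf{x}^o)=\mathcal{O}(\epsilon)$ for every $i\in\mathcal{N}^1_r$ (computed in $T_o$) and $\eta_i(\mathbf{x}^n)=\mathcal{O}(\epsilon)$ for every $i\in\mathcal{N}^1_a$ (computed in $T_n$).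
   Context: The 1-ring neighbour set $\mathcal{N}^1$ of a cell consists of all mesh nodes that are vertices of the cell or are joined by a mesh edge to a vertex of the cell. Barycentric coordinates of $\mathbf{x}$ in a simplex with vertices $\mathbf{x}_{n_1},\dots,\mathbf{x}_{n_{d+1}}$ are the unique numbers $B_{n_k}(\mathbf{x})$ with $\sum_k B_{n_k}=1$ and $\sum_k B_{n_k}\mathbf{x}_{n_k}=\mathbf{x}$. The constants in $\mathcal{O}(\epsilon)$ depend only on the mesh (e.g. on the distances of the vertices of $T_o,T_n$ opposite $F$ to the facet $F$). *)

From HB Require Import structures.
From mathcomp Require Import all_boot all_order all_algebra.
From mathcomp Require Import reals.
Set Implicit Arguments. Unset Strict Implicit. Unset Printing Implicit Defensive.
Import Order.TTheory GRing.Theory Num.Theory.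
Local Open Scope ring_scope.

Section Mesh.
Variables (R : realType) (d : nat) (I : finType) (p : I -> 'rV[R]_d).

Definition enorm (v : 'rV[R]_d) : R := Num.sqrt (\sum_(k < d) v 0 k ^+ 2).

Definition is_bary (S : {set I}) (x : 'rV[R]_d) (B : I -> R) : Prop :=
  \sum_(n in S) B n = 1 /\ \sum_(n in S) B n *: p n = x.

Definition in_hull (S : {set I}) (x : 'rV[R]_d) : Prop :=
  exists B : I -> R, is_bary S x B /\ (forall n, n \in S -> 0 <= B n).

Definition aff_indep (S : {set I}) : Prop :=
  forall w : I -> R, \sum_(n in S) w n = 0 -> \sum_(n in S) w n *: p n = 0 ->
    forall n, n \in S -> w n = 0.

Definition conforming_simplicial_mesh (cells : {set {set I}}) : Prop :=
  (forall T, T \in cells -> #|T| = d.+1 /\ aff_indep T) /\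
  (forall T T', T \in cells -> T' \in cells -> forall x,
      in_hull T x -> in_hull T' x -> in_hull (T :&: T') x).

End Mesh.

Section Graph.
Variables (I : finType) (cells : {set {set I}}).

Definition adj (i j : I) : bool :=
  (i != j) && [exists T in cells, (i \in T) && (j \in T)].

Definition adjmx (R : pzRingType) (i j : I) : R := (adj i j)%:R.

Definition ring1 (T : {set I}) : {set I} :=
  [set i | (i \in T) || [exists n in T, adj i n]].

(* eta_i(x) = sum_{n in N^0(T)} B_n(x) A_{i,n}, B the barycentric coords of x in T *)
Definition eta_mesh (R : pzRingType) (T : {set I}) (B : I -> R) (i : I) : R :=
  \sum_(n in T) B n * adjmx R i n.

End Graph.

From HB Require Import structures.
From mathcomp Require Import all_boot all_order all_algebra.
From mathcomp Require Import reals.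
From mathcomp Require Import lra.
Set Implicit Arguments. Unset Strict Implicit. Unset Printing Implicit Defensive.
Import Order.TTheory GRing.Theory Num.Theory.
Local Open Scope ring_scope.

(* Let a be the vertex of To off the common facet F, and b the vertex of Tn
   off F.  A node that leaves the 1-ring is adjacent to no vertex of Tn, so
   eta_i(xo) is at most the barycentric coordinate Bo(a).  That coordinate is
   the restriction to To of an affine function f vanishing on F.  Conformity
   forces f(p b) <= 0: otherwise points of Tn close to F would lie in To
   without lying in F.  Hence f <= 0 on Tn and
   Bo(a) = f(xo) <= f(xo) - f(xn) <= Lip(f) |xn - xo|.
   Added nodes are handled symmetrically. *)

Section AffineForm.
Variables (R : realType) (d : nat).

Definition affine_form (z : 'cV[R]_d) (c : R) (x : 'rV[R]_d) : R := (x *m z) 0 0 + c.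

Lemma enormN (v : 'rV[R]_d) : enorm (- v) = enorm v.
Proof. by rewrite /enorm; congr Num.sqrt; apply: eq_bigr => k _; rewrite mxE sqrrN. Qed.

Lemma norm_mulmx_le_enorm (z : 'cV[R]_d) (v : 'rV[R]_d) :
  `|(v *m z) 0 0| <= (\sum_k `|z k 0|) * enorm v.
Proof.
rewrite mxE mulr_suml; apply: le_trans (ler_norm_sum _ _ _) _.
apply: ler_sum => k _; rewrite normrM mulrC ler_wpM2l //.
rewrite /enorm -sqrtr_sqr ler_wsqrtr // (bigD1 k) //= lerDl.
by apply: sumr_ge0 => *; apply: sqr_ge0.
Qed.

Lemma affine_form_lipschitz z c (x y : 'rV[R]_d) :
  `|affine_form z c y - affine_form z c x| <= (\sum_k `|z k 0|) * enorm (y - x).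
Proof.
have -> : affine_form z c y - affine_form z c x = ((y - x) *m z) 0 0.
  by rewrite /affine_form mulmxBl !mxE; lra.
exact: norm_mulmx_le_enorm.
Qed.

Lemma affine_form_bary (I : finType) (p : I -> 'rV[R]_d) z c S x B :
  is_bary p S x B -> affine_form z c x = \sum_(n in S) B n * affine_form z c (p n).
Proof.
case=> B1 <-; rewrite /affine_form mulmx_suml summxE.
under eq_bigr do rewrite -scalemxAl mxE.
under [in RHS]eq_bigr do rewrite mulrDr.
by rewrite big_split /= -big_distrl /= B1 mul1r.
Qed.

End AffineForm.

Section VertexMatrix.
Variables (R : realType) (d : nat) (I : finType) (p : I -> 'rV[R]_d) (S : {set I}).

Definition vertex_mx : 'M[R]_(#|S|, d + 1) :=
  \matrix_(i < #|S|) row_mx (p (enum_val i)) (1%:M : 'M[R]_1).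

Lemma mul_vertex_mx x0 (Sx0 : x0 \in S) (v : 'rV[R]_#|S|) :
  let w n := v 0 (enum_rank_in Sx0 n) in
  v *m vertex_mx = row_mx (\sum_(n in S) w n *: p n) (\sum_(n in S) w n)%:M.
Proof.
rewrite /= mulmx_sum_row !(big_enum_val (A := mem S)) /=.
under eq_bigr do rewrite rowK.
under [X in row_mx X _]eq_bigr do rewrite enum_valK_in.
under [X in row_mx _ X%:M]eq_bigr do rewrite enum_valK_in.
apply: (big_rec3 (fun a b c => a = row_mx b c%:M)); first by rewrite raddf0 row_mx0.
by move=> i y1 y2 y3 _ ->; rewrite scale_row_mx add_row_mx scalemx1 raddfD.
Qed.

Hypothesis S_indep : aff_indep p S.

Lemma vertex_mx_free : row_free vertex_mx.
Proof.
apply: inj_row_free => v vM0; apply/rowP => j; have Sx := enum_valP j.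
move: vM0; rewrite (mul_vertex_mx Sx) => /eqP.
rewrite row_mx_eq0 => /andP[/eqP wp0 /eqP w0].
have {}w0 := congr1 (fun A : 'M[R]_1 => A 0 0) w0; rewrite /= !mxE mulr1n in w0.
rewrite mxE -[in LHS](enum_valK_in Sx j).
exact: S_indep w0 wp0 _ Sx.
Qed.

Lemma exists_vertex_form a : a \in S -> exists (z : 'cV[R]_d) (c : R),
  forall n, n \in S -> affine_form z c (p n) = (n == a)%:R.
Proof.
move=> Sa; have /row_freeP [B BK] := vertex_mx_free; set h := enum_rank_in Sa.
pose z := B *m delta_mx (h a) (0 : 'I_1).
exists (usubmx z), (dsubmx z 0 0) => n Sn.
have <- : (row (h n) vertex_mx *m z) 0 0 = (n == a)%:R.
  rewrite /z mulmxA -row_mul BK -row_mul mul1mx !mxE andbT.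
  by rewrite (inj_in_eq (@enum_rank_in_inj _ _ _ _ Sa Sa)).
have -> : row (h n) vertex_mx *m z = p n *m usubmx z + dsubmx z.
  by rewrite rowK enum_rankK_in // -{1}[z]vsubmxK mul_row_col mul1mx.
by rewrite [in RHS]mxE.
Qed.

Hypothesis S_card : #|S| = d.+1.

Lemma exists_bary x : exists B, is_bary p S x B.
Proof.
have /card_gt0P[x0 Sx0] : (0 < #|S|)%N by rewrite S_card.
have /row_fullP [B BK] : row_full vertex_mx.
  by move: vertex_mx_free; rewrite /row_free /row_full => /eqP ->; rewrite S_card addn1.
pose u := row_mx x (1%:M : 'M[R]_1) *m B.
have : u *m vertex_mx = row_mx x 1%:M by rewrite -mulmxA BK mulmx1.
rewrite (mul_vertex_mx Sx0) => /eq_row_mx[Bp B1].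
exists (fun n => u 0 (enum_rank_in Sx0 n)); split => //.
by have := congr1 (fun A : 'M[R]_1 => A 0 0) B1; rewrite !mxE /= !mulr1n.
Qed.

End VertexMatrix.

Section CommonPoint.
Variables (R : realType) (d : nat) (I : finType) (p : I -> 'rV[R]_d).
Variables (F : {set I}) (a b : I).
Hypotheses (aF : a \notin F) (bF : b \notin F).

Lemma exists_common_point mu : is_bary p (a |: F) (p b) mu -> 0 <= mu a ->
  exists x B, [/\ is_bary p (b |: F) x B, 0 < B b,
    (forall n, n \in b |: F -> 0 <= B n) & in_hull p (a |: F) x].
Proof.
case; rewrite !big_setU1 //= => mu1 mup mua.
have Fa n : n \in F -> (n == a) = false by move/(memPn aF)/negbTE.
have Fb n : n \in F -> (n == b) = false by move/(memPn bF)/negbTE.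
pose K := \sum_(n in F) `|mu n|.
have muK n : n \in F -> - mu n <= K.
  move=> Fn; have /ler_normlP[] // : `|mu n| <= K.
  by rewrite /K (bigD1 n) //= lerDl; apply: sumr_ge0.
have K0 : 0 <= K by apply: sumr_ge0.
(* The point is t p_b + s (sum of the p_n, n in F) with t + #|F| s = 1; its
   coordinates s + t mu n in a |: F stay nonnegative as long as s >= t K. *)
pose t := (1 + K * #|F|%:R)^-1; pose s := K * t.
have D0 : 0 < 1 + K * #|F|%:R by rewrite ltr_wpDr ?mulr_ge0.
have t0 : 0 < t by rewrite invr_gt0.
have s0 : 0 <= s := mulr_ge0 K0 (ltW t0).
have ts1 : t + s *+ #|F| = 1.
  by rewrite /s -mulr_natr mulrAC -[X in X + _]mul1r -mulrDl mulfV ?gt_eqF.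
exists (t *: p b + \sum_(n in F) s *: p n), (fun n => if n == b then t else s).
split; [|by rewrite eqxx|by move=> n _; case: (n == b) => //; apply: ltW|].
  split; rewrite big_setU1 //= eqxx.
    by rewrite (eq_bigr (fun _ => s)) ?sumr_const // => n Fn; rewrite Fb.
  by congr (_ + _); apply: eq_bigr => n Fn; rewrite Fb.
exists (fun n => if n == a then t * mu a else s + t * mu n); split; last first.
  move=> n /setU1P[->|Fn]; first by rewrite eqxx mulr_ge0 ?(ltW t0).
  rewrite Fa // /s mulrC -mulrDr mulr_ge0 ?(ltW t0) //.
  by have := muK n Fn; lra.
split; rewrite big_setU1 //= eqxx.
  rewrite (eq_bigr (fun n => s + t * mu n)) => [|n Fn]; last by rewrite Fa.
  by rewrite big_split /= sumr_const -big_distrr /= -ts1 addrCA -mulrDr mu1 mulr1 addrC.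
under eq_bigr => n Fn do rewrite Fa // scalerDl -[(t * _) *: _]scalerA.
rewrite big_split /= -[X in _ + (_ + X)]scaler_sumr addrCA.
by rewrite -[(t * mu a) *: _]scalerA -scalerDr mup addrC.
Qed.

End CommonPoint.

Section Facet.
Variables (R : realType) (d : nat) (I : finType) (p : I -> 'rV[R]_d).
Variables (cells : {set {set I}}) (F : {set I}) (a b : I).
Hypotheses (mesh : conforming_simplicial_mesh p cells)
  (To_cell : a |: F \in cells) (Tn_cell : b |: F \in cells)
  (aF : a \notin F) (bF : b \notin F) (ab : a != b).

Section VertexForm.
Variables (z : 'cV[R]_d) (c : R).
Hypothesis form_vertex :
  forall n, n \in a |: F -> affine_form z c (p n) = (n == a)%:R.

Local Notation f := (affine_form z c).

Lemma vertex_form_facet n : n \in F -> f (p n) = 0.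
Proof. by move=> Fn; rewrite form_vertex ?setU1r // (negbTE (memPn aF n Fn)). Qed.

Lemma vertex_form_bary x B : is_bary p (a |: F) x B -> f x = B a.
Proof.
move=> xB; rewrite (affine_form_bary _ _ xB) big_setU1 //= big1 ?addr0.
  by rewrite form_vertex ?setU11 // eqxx mulr1.
by move=> n Fn; rewrite vertex_form_facet ?mulr0.
Qed.

Lemma vertex_form_opposite x B : is_bary p (b |: F) x B -> f x = B b * f (p b).
Proof.
move=> xB; rewrite (affine_form_bary _ _ xB) big_setU1 //= big1 ?addr0 //.
by move=> n Fn; rewrite vertex_form_facet ?mulr0.
Qed.

Lemma vertex_form_opposite_le0 : f (p b) <= 0.
Proof.
rewrite leNgt; apply/negP => fb_gt0.
have [cardo indo] := mesh.1 _ To_cell.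
have [mu mub] := exists_bary indo cardo (p b).
have mua : 0 <= mu a by rewrite -(vertex_form_bary mub) ltW.
have [x [B [xB Bb_gt0 B_ge0 x_o]]] := exists_common_point aF bF mub mua.
have x_n : in_hull p (b |: F) x by exists B.
have [g [xg _]] := mesh.2 _ _ To_cell Tn_cell x x_o x_n.
have FE : (a |: F) :&: (b |: F) = F.
  rewrite -setUIl; apply/setUidPr/subsetP => n; rewrite !inE => /andP[/eqP-> /eqP ba].
  by move: ab; rewrite ba eqxx.
rewrite FE in xg.
have := vertex_form_opposite xB.
rewrite (affine_form_bary _ _ xg) big1 => [/esym/eqP|n Fn]; last first.
  by rewrite vertex_form_facet ?mulr0.
by rewrite mulf_eq0 !gt_eqF.
Qed.

Lemma vertex_form_le0 x B : is_bary p (b |: F) x B ->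
  (forall n, n \in b |: F -> 0 <= B n) -> f x <= 0.
Proof.
move=> xB B_ge0; rewrite (vertex_form_opposite xB).
by rewrite mulr_ge0_le0 ?B_ge0 ?setU11 ?vertex_form_opposite_le0.
Qed.

End VertexForm.

Lemma bary_removed_vertex_le : exists L : R, 0 <= L /\
  forall xo xn Bo Bn, is_bary p (a |: F) xo Bo -> is_bary p (b |: F) xn Bn ->
    (forall n, n \in b |: F -> 0 <= Bn n) -> Bo a <= L * enorm (xn - xo).
Proof.
have [_ indo] := mesh.1 _ To_cell.
have [z [c form_vertex]] := exists_vertex_form indo (setU11 a F).
exists (\sum_k `|z k 0|); split=> [|xo xn Bo Bn xoB xnB Bn_ge0].
  by apply: sumr_ge0.
rewrite -(vertex_form_bary form_vertex xoB).
have := vertex_form_le0 form_vertex xnB Bn_ge0.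
have /ler_normlP[] := affine_form_lipschitz z c xo xn.
lra.
Qed.

End Facet.

Lemma cells_common_facet (I : finType) (k : nat) (T T' : {set I}) :
  #|T| = k.+1 -> #|T'| = k.+1 -> #|T :&: T'| = k ->
  exists F a b, [/\ T = a |: F, T' = b |: F, a \notin F, b \notin F & a != b].
Proof.
have setD_single (X Y : {set I}) :
    #|X| = k.+1 -> #|X :&: Y| = k -> exists a, X :\: Y = [set a].
  move=> cX cXY; apply/cards1P.
  by rewrite -(eqn_add2l k) addn1 -cX -cXY cardsID.
move=> cT cT' cTT'.
have [a Ea] := setD_single T T' cT cTT'.
have [|b Eb] := setD_single T' T cT'; first by rewrite setIC.
have : a \in T :\: T' by rewrite Ea set11.
have : b \in T' :\: T by rewrite Eb set11.
rewrite !inE => /andP[bT bT'] /andP[aT' aT].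
exists (T :&: T'), a, b; split.
- by rewrite -Ea setUC setID.
- by rewrite setIC -Eb setUC setID.
- by rewrite inE (negbTE aT') andbF.
- by rewrite inE (negbTE bT).
- by apply: contraNneq bT => <-.
Qed.

Lemma norm_eta_mesh_le (R : realType) (I : finType) (cells : {set {set I}})
    (F : {set I}) (a b i : I) (B : I -> R) :
  a \notin F -> 0 <= B a -> i \notin ring1 cells (b |: F) ->
  `|eta_mesh cells (a |: F) B i| <= B a.
Proof.
move=> aF Ba_ge0; rewrite inE negb_or => /andP[_ /existsPn i_nadj].
rewrite /eta_mesh big_setU1 //= big1 ?addr0 => [|n Fn].
  by rewrite /adjmx; case: adj; rewrite ?mulr1 ?mulr0 ?normr0 ?ger0_norm.
by have := i_nadj n; rewrite setU1r //= /adjmx => /negbTE ->; rewrite mulr0.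
Qed.

Theorem mainTheorem2 (R : realType) (d : nat) (I : finType)
    (p : I -> 'rV[R]_d) (cells : {set {set I}})
    (Hmesh : conforming_simplicial_mesh p cells)
    (To Tn : {set I}) (HTo : To \in cells) (HTn : Tn \in cells)
    (Hneq : To != Tn) (Hfacet : #|To :&: Tn| = d) :
  exists C : R, 0 <= C /\
    forall (xo xn : 'rV[R]_d) (Bo Bn : I -> R),
      is_bary p To xo Bo -> (forall n, n \in To -> 0 <= Bo n) ->
      is_bary p Tn xn Bn -> (forall n, n \in Tn -> 0 <= Bn n) ->
      (forall i, i \in ring1 cells To :\: ring1 cells Tn ->
         `|eta_mesh (R:=R) cells To Bo i| <= C * enorm (xn - xo)) /\
      (forall i, i \in ring1 cells Tn :\: ring1 cells To ->
         `|eta_mesh (R:=R) cells Tn Bn i| <= C * enorm (xn - xo)).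
Proof.
have [[cardo _] [cardn _]] := (Hmesh.1 _ HTo, Hmesh.1 _ HTn).
have [F [a [b [Eo En aF bF ab]]]] := cells_common_facet cardo cardn Hfacet.
subst To Tn.
have [Lo [Lo_ge0 Ho]] := bary_removed_vertex_le Hmesh HTo HTn aF bF ab.
have [|Ln [Ln_ge0 Hn]] := bary_removed_vertex_le Hmesh HTn HTo bF aF.
  by rewrite eq_sym.
exists (Lo + Ln); split=> [|xo xn Bo Bn xoB Bo_ge0 xnB Bn_ge0].
  exact: addr_ge0.
have e_ge0 : 0 <= enorm (xn - xo) := sqrtr_ge0 _.
have Loe := mulr_ge0 Lo_ge0 e_ge0; have Lne := mulr_ge0 Ln_ge0 e_ge0.
have := Ho _ _ _ _ xoB xnB Bn_ge0; have := Hn _ _ _ _ xnB xoB Bo_ge0.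
rewrite -opprB enormN mulrDl => bn_le bo_le.
split=> i /setDP[_ i_out].
- have := norm_eta_mesh_le aF (Bo_ge0 _ (setU11 _ _)) i_out; lra.
- have := norm_eta_mesh_le bF (Bn_ge0 _ (setU11 _ _)) i_out; lra.
Qed.
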